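(* Let $d$ be a positive integer and let $\mu$ be a Borel probability measure on $\mathbb{S}^{d-1}$. Then $$\int_{\mathbb{S}^{d-1}}\int_{\mathbb{S}^{d-1}}\int_{\mathbb{S}^{d-1}}\left|\langle x,y\rangle\langle x,z\rangle\langle y,z\rangle\right|\,d\mu(x)\,d\mu(y)\,d\mu(z)\ge\frac{1}{d^2},$$ with equality if and only if $\mu$ is isotropic and $\langle x,y\rangle\langle x,z\rangle\langle y,z\rangle\ge 0$ for all points $x,y,z$ in the support of $\mu$.
   Context: A Borel probability measure $\mu$ on $\mathbb{S}^{d-1}$ is isotropic if $\int_{\mathbb{S}^{d-1}}xx^T\,d\mu(x)=\frac1d I_d$, equivalently $\int\langle x,y\rangle^2\,d\mu(x)=\frac1d$ for every $y\in\mathbb{S}^{d-1}$. *)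

From HB Require Import structures.
From mathcomp Require Import all_boot all_order all_algebra.
From mathcomp Require Import all_classical all_reals all_analysis.
Set Implicit Arguments. Unset Strict Implicit. Unset Printing Implicit Defensive.
Import Order.TTheory GRing.Theory Num.Theory.
Import numFieldNormedType.Exports.
Local Open Scope classical_set_scope.
Local Open Scope ring_scope.

Definition Rd (R : realType) (d : nat) : measurableType _ :=
  g_sigma_algebraType (@open 'rV[R]_d).

Definition dotp (R : realType) (d : nat) (x y : Rd R d) : R :=
  \sum_(i < d) (x : 'rV[R]_d) 0 i * (y : 'rV[R]_d) 0 i.

Definition sphere (R : realType) (d : nat) : set (Rd R d) :=
  [set x | dotp x x = 1].
Arguments sphere : clear implicits.

Definition msupport (R : realType) (d : nat)
    (mu : {measure set (Rd R d) -> \bar R}) : set (Rd R d) :=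
  [set x | forall U : set 'rV[R]_d, open U -> U x -> (0 < mu U)%E].

Definition isotropic (R : realType) (d : nat)
    (mu : {measure set (Rd R d) -> \bar R}) : Prop :=
  forall y, sphere R d y ->
    (\int[mu]_(x in sphere R d) ((dotp x y) ^+ 2)%:E = (d%:R^-1)%:E)%E.

(* Let f(x,y,z) := <x,y><x,z><y,z> and let M := \int x x^T dmu be the second-moment
   matrix of mu: it is symmetric, positive semidefinite and of trace 1.  Integrating
   f successively in x, y and z only ever integrates a quadratic form against M, and
   gives tr M^3.  With a := 1/d,
     tr M^3 - a^2 = \sum_k (M e_k - a e_k)^T M (M e_k - a e_k) + 2a |M - aI|^2,
   so tr M^3 >= 1/d^2, with equality iff M = I/d, i.e. iff mu is isotropic.  As
   |f| >= f, the triple integral of |f| is at least tr M^3 >= 1/d^2.  If it equals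
   1/d^2 then M = I/d, and a triple of support points with f < 0 would give, by
   continuity, neighbourhoods of positive mass on which |f| - f is bounded below,
   making the integral strictly larger.  Conversely the complement of the support
   is null (R^d has a countable base of rational balls), so under the sign
   condition |f| = f almost everywhere and the integral is tr M^3 = 1/d^2. *)

From HB Require Import structures.
From mathcomp Require Import all_boot all_order all_algebra.
From mathcomp Require Import all_classical all_reals all_analysis.
From mathcomp Require Import measurable_realfun.
From mathcomp Require Import ring lra.
Set Implicit Arguments. Unset Strict Implicit. Unset Printing Implicit Defensive.
Import Order.TTheory GRing.Theory Num.Theory.
Import numFieldNormedType.Exports.
Local Open Scope classical_set_scope.
Local Open Scope ring_scope.

Section TraceCube.
Variables (R : realFieldType) (d : nat).
Implicit Types (c M : 'I_d -> 'I_d -> R) (u v : 'I_d -> R).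

Definition frob c M := \sum_i \sum_j c i j * M i j.
Definition outer u v i j := u i * v j.
(* [tr (M^T M M)], that is [tr M^3] for a symmetric [M]. *)
Definition cube_trace M := frob (fun j k => \sum_i M i j * M i k) M.

Lemma sum_delta (a : R) (k : 'I_d) (g : 'I_d -> R) :
  \sum_j a * (k == j)%:R * g j = a * g k.
Proof.
rewrite (bigD1 k) //= eqxx mulr1 big1 ?addr0 // => j /negbTE.
by rewrite eq_sym => ->; rewrite mulr0 mul0r.
Qed.

Lemma frob_outer_pair M (p q : R) (i j : 'I_d) :
  let w k := p * (i == k)%:R + q * (j == k)%:R in
  frob (outer w w) M = p ^+ 2 * M i i + p * q * (M i j + M j i) + q ^+ 2 * M j j.
Proof.
move=> w; rewrite /frob /outer.
have inner k : \sum_l w k * w l * M k l = w k * p * M k i + w k * q * M k j.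
  rewrite (eq_bigr (fun l => (w k * p) * (i == l)%:R * M k l
    + (w k * q) * (j == l)%:R * M k l)); last by move=> l _; rewrite /w; ring.
  by rewrite big_split /= !sum_delta.
rewrite (eq_bigr _ (fun k _ => inner k)) /w.
rewrite (eq_bigr (fun k => (p * p) * (i == k)%:R * M k i + (p * q) * (i == k)%:R * M k j
   + (q * p) * (j == k)%:R * M k i + (q * q) * (j == k)%:R * M k j)); last by move=> k _; ring.
rewrite !big_split /= !sum_delta; ring.
Qed.

Lemma sum_sqr_pair (p q : R) (i j : 'I_d) :
  \sum_k (p * (i == k)%:R + q * (j == k)%:R) ^+ 2 =
  p ^+ 2 + 2 * p * q * (i == j)%:R + q ^+ 2.
Proof.
rewrite (eq_bigr (fun k => (p * p) * (i == k)%:R * (i == k)%:R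
   + (2 * p * q) * (i == k)%:R * (j == k)%:R
   + (q * q) * (j == k)%:R * (j == k)%:R)); last by move=> k _; ring.
by rewrite !big_split /= !sum_delta !eqxx mulr1n [j == i]eq_sym; ring.
Qed.

Lemma cube_trace_scalar (a : R) :
  cube_trace (fun i j => a * (i == j)%:R) = d%:R * a ^+ 3.
Proof.
rewrite /cube_trace /frob.
have inner (j k : 'I_d) : \sum_i a * (i == j)%:R * (a * (i == k)%:R) = a * a * (j == k)%:R.
  rewrite -(sum_delta _ _ (fun i => (i == k)%:R)); apply: eq_bigr => i _.
  by rewrite [i == j]eq_sym; ring.
under eq_bigr do under eq_bigr do rewrite inner.
rewrite (eq_bigr (fun _ => a ^+ 3)); first by rewrite sumr_const card_ord mulr_natl.
move=> j _; rewrite (eq_bigr (fun k => a ^+ 3 * (j == k)%:R * (j == k)%:R)).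
  by rewrite sum_delta eqxx mulr1n mulr1.
by move=> k _; ring.
Qed.

Definition iso_dev M i j := M i j - d%:R^-1 * (i == j)%:R.

Section PositiveTraceOne.
Variable M : 'I_d -> 'I_d -> R.
Hypothesis M_sym : forall i j, M i j = M j i.
Hypothesis M_psd : forall v, 0 <= frob (outer v v) M.
Hypothesis M_tr : \sum_i M i i = 1.
Hypothesis d_gt0 : (0 < d)%N.

Local Notation a := (d%:R^-1 : R).

Lemma frob_outer_shift u (b : R) (k : 'I_d) :
  let w i := u i - b * (k == i)%:R in
  frob (outer w w) M =
  frob (outer u u) M - 2 * b * \sum_j u j * M k j + b ^+ 2 * M k k.
Proof.
move=> w; rewrite /frob /outer /w.
have inner i : \sum_j (u i - b * (k == i)%:R) * (u j - b * (k == j)%:R) * M i j =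
    \sum_j u i * u j * M i j - b * (u i * M i k)
    - b * (k == i)%:R * \sum_j u j * M i j + b ^+ 2 * (k == i)%:R * M i k.
  rewrite (eq_bigr (fun j => u i * u j * M i j - (b * u i) * (k == j)%:R * M i j
     - (b * (k == i)%:R) * (u j * M i j) + (b ^+ 2 * (k == i)%:R) * (k == j)%:R * M i j));
    last by move=> j _; ring.
  by rewrite !big_split /= !sumrN -big_distrr /= !sum_delta; ring.
rewrite (eq_bigr _ (fun i _ => inner i)) !big_split /= !sumrN !sum_delta -big_distrr /=.
have -> : \sum_i u i * M i k = \sum_j u j * M k j.
  by apply: eq_bigr => i _; rewrite M_sym.
ring.
Qed.

Lemma cube_trace_sub :
  cube_trace M - a ^+ 2 =
  \sum_k frob (outer (iso_dev M k) (iso_dev M k)) M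
  + 2 * a * \sum_i \sum_j iso_dev M i j ^+ 2.
Proof.
pose P2 := \sum_i \sum_j M i j * M i j.
have cubeE : \sum_k frob (outer (M k) (M k)) M = cube_trace M.
  rewrite /cube_trace /frob /outer.
  under [RHS]eq_bigr do under eq_bigr do rewrite big_distrl /=.
  under [RHS]eq_bigr do rewrite exchange_big /=.
  by rewrite [RHS]exchange_big.
have shiftE : \sum_k frob (outer (iso_dev M k) (iso_dev M k)) M =
    cube_trace M - 2 * a * P2 + a ^+ 2.
  rewrite (eq_bigr _ (fun k _ => frob_outer_shift (M k) a k)) !big_split /= sumrN.
  by rewrite cubeE -!big_distrr /= M_tr mulr1.
have devE : \sum_i \sum_j iso_dev M i j ^+ 2 = P2 - 2 * a + a ^+ 2 * d%:R.
  have row i : \sum_j iso_dev M i j ^+ 2 = \sum_j M i j * M i j - 2 * a * M i i + a ^+ 2.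
    rewrite (eq_bigr (fun j => M i j * M i j - (2 * a) * (i == j)%:R * M i j
        + a ^+ 2 * (i == j)%:R * (i == j)%:R)); last by move=> j _; rewrite /iso_dev; ring.
    by rewrite !big_split /= sumrN !sum_delta eqxx mulr1n mulr1.
  rewrite (eq_bigr _ (fun i _ => row i)) !big_split /= sumrN -big_distrr /= M_tr.
  by rewrite sumr_const card_ord mulr_natr mulr1.
have d0 : d%:R != 0 :> R by rewrite pnatr_eq0 -lt0n.
by rewrite shiftE devE; field.
Qed.

Let sum_iso_dev_ge0 : 0 <= 2 * a * \sum_i \sum_j iso_dev M i j ^+ 2.
Proof.
rewrite !mulr_ge0 ?invr_ge0 ?ler0n ?sumr_ge0 // => i _.
by rewrite sumr_ge0 // => j _; exact: sqr_ge0.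
Qed.

Lemma cube_trace_ge : a ^+ 2 <= cube_trace M.
Proof.
by rewrite -subr_ge0 cube_trace_sub addr_ge0 ?sum_iso_dev_ge0 // sumr_ge0.
Qed.

Lemma cube_trace_eq : cube_trace M = a ^+ 2 -> forall i j, M i j = a * (i == j)%:R.
Proof.
move=> /eqP; rewrite -subr_eq0 cube_trace_sub paddr_eq0 ?sum_iso_dev_ge0 ?sumr_ge0 //.
have a2 : 2 * a != 0 by rewrite mulf_neq0 ?invr_eq0 ?pnatr_eq0 // -lt0n.
case/andP=> _; rewrite mulf_eq0 (negbTE a2) /=.
rewrite psumr_eq0 => [/allP dev0 i j|i _]; last by rewrite sumr_ge0 // => j _; exact: sqr_ge0.
move: (dev0 i (mem_index_enum _)) => /=.
rewrite psumr_eq0 => [/allP/(_ j (mem_index_enum _))|k _]; last exact: sqr_ge0.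
by rewrite /= sqrf_eq0 subr_eq0 => /eqP.
Qed.

End PositiveTraceOne.
End TraceCube.

Section SphereGeometry.
Variables (R : realType) (d : nat).
Local Notation T := (Rd R d).
Local Notation S := (sphere R d).

Definition entry (x : T) (i : 'I_d) : R := (x : 'rV[R]_d) 0 i.

Lemma Rd_continuous_measurable (g : 'rV[R]_d -> R) :
  continuous g -> measurable_fun setT (g : T -> R).
Proof.
move=> cg; apply: (measurability _ (RGenOpens.measurableE R)).
move=> _ [_ [a [b ->] <-]]; rewrite setTI; apply: sub_sigma_algebra.
by apply: open_comp; [move=> x _; exact: cg | exact: interval_open].
Qed.

Lemma measurable_entry i : measurable_fun setT (entry ^~ i).
Proof. by apply: Rd_continuous_measurable; exact: coord_continuous. Qed.

Lemma measurable_dotp d' (U : measurableType d') (p q : U -> T) :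
  measurable_fun setT p -> measurable_fun setT q ->
  measurable_fun setT (fun u => dotp (p u) (q u)).
Proof.
move=> mp mq; apply: measurable_sum => i; apply: measurable_funM.
- exact: measurableT_comp (measurable_entry i) mp.
- exact: measurableT_comp (measurable_entry i) mq.
Qed.

Lemma measurable_sphere : measurable S.
Proof.
have := measurable_dotp (@measurable_id _ T setT) (@measurable_id _ T setT).
by move=> /(_ measurableT [set 1]); rewrite setTI; apply; exact: measurable_set1.
Qed.

Lemma sphere_entry_le1 x i : S x -> `|entry x i| <= 1.
Proof.
move=> Sx; have : entry x i ^+ 2 <= 1.
  rewrite -Sx /dotp (bigD1 i) //= -expr2 lerDl.
  by apply: sumr_ge0 => j _; rewrite -expr2 sqr_ge0.
by move=> h; rewrite -ler_sqr ?nnegrE // expr1n real_normK ?num_real.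
Qed.

Lemma sphere_dotp_le1 x y : S x -> S y -> `|dotp x y| <= 1.
Proof.
rewrite /sphere /= /dotp => Sx Sy; apply: (le_trans (ler_norm_sum _ _ _)).
have <- : \sum_i (x 0 i * x 0 i + y 0 i * y 0 i) / 2 = 1 :> R.
  by rewrite -mulr_suml big_split /= Sx Sy; field.
apply: ler_sum => i _; rewrite normrM.
have := sqr_ge0 (`|x 0 i| - `|y 0 i|).
by rewrite -[x 0 i * _]real_normK ?num_real // -[y 0 i * _]real_normK ?num_real //; nra.
Qed.

Definition quad (c : 'I_d -> 'I_d -> R) (x : T) := frob c (outer (entry x) (entry x)).

Lemma measurable_quad c : measurable_fun setT (quad c).
Proof.
apply: measurable_sum => i; apply: measurable_sum => j.
by apply: measurable_funM => //; apply: measurable_funM; exact: measurable_entry.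
Qed.

Lemma sphere_quad_le c x : S x -> `|quad c x| <= \sum_i \sum_j `|c i j|.
Proof.
move=> Sx; apply: (le_trans (ler_norm_sum _ _ _)); apply: ler_sum => i _.
apply: (le_trans (ler_norm_sum _ _ _)); apply: ler_sum => j _.
rewrite normrM ler_piMr // /outer normrM.
by rewrite -[1]mul1r ler_pM ?sphere_entry_le1.
Qed.

Lemma quad_outer v x :
  quad (outer v v) x = (\sum_i v i * entry x i) ^+ 2.
Proof.
rewrite /quad /frob /outer expr2 big_distrl /=; apply: eq_bigr => i _.
by rewrite big_distrr /=; apply: eq_bigr => j _; ring.
Qed.

Definition dotp3 (x y z : T) := dotp x y * dotp x z * dotp y z.

Lemma abs_dotp3_01 x y z : S x -> S y -> S z -> (0 <= `|dotp3 x y z|%:E <= 1)%E.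
Proof.
move=> Sx Sy Sz; rewrite !lee_fin normr_ge0 !normrM -[1](mulr1 1) -[X in X * 1](mulr1 1).
by rewrite !ler_pM ?mulr_ge0 // sphere_dotp_le1.
Qed.

Lemma dotp3_quad x y z :
  dotp3 x y z = quad (fun i j => entry y i * entry z j * dotp y z) x.
Proof.
rewrite /dotp3 /quad /frob /outer -mulrA {1}/dotp big_distrl /=.
apply: eq_bigr => i _; rewrite {1}/dotp big_distrl big_distrr /=.
by apply: eq_bigr => j _; rewrite /entry; ring.
Qed.

Lemma measurable_abs_dotp3 y z : measurable_fun setT (fun x => `|dotp3 x y z|%:E).
Proof.
apply/measurable_EFinP; apply: (measurableT_comp (@normr_measurable _ setT)).
by under eq_fun do rewrite dotp3_quad; exact: measurable_quad.
Qed.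

Lemma frob_dotp_quad M y z :
  frob (fun i j => entry y i * entry z j * dotp y z) M =
  quad (fun i k => \sum_j M i j * entry z j * entry z k) y.
Proof.
rewrite /quad /frob /outer; apply: eq_bigr => i _.
under eq_bigr do rewrite /dotp big_distrr big_distrl /=.
rewrite exchange_big /=; apply: eq_bigr => k _.
by rewrite big_distrl /=; apply: eq_bigr => j _; rewrite /entry; ring.
Qed.

Lemma frob_quad_cube M z :
  frob (fun i k => \sum_j M i j * entry z j * entry z k) M =
  quad (fun j k => \sum_i M i j * M i k) z.
Proof.
rewrite /quad /frob /outer.
under eq_bigr do under eq_bigr do rewrite big_distrl /=.
under [RHS]eq_bigr do under eq_bigr do rewrite big_distrl /=.
rewrite exchange_big /=; under eq_bigr do rewrite exchange_big /=.
rewrite exchange_big /=.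
by apply: eq_bigr => j _; apply: eq_bigr => k _; apply: eq_bigr => i _; ring.
Qed.

Lemma dotp_cvg {U : Type} (F : set_system U) {FF : Filter F}
    (a b : U -> 'rV[R]_d) (a0 b0 : 'rV[R]_d) :
  a @ F --> a0 -> b @ F --> b0 -> (fun u => dotp (a u) (b u)) @ F --> dotp a0 b0.
Proof.
move=> a_cvg b_cvg; apply: (cvg_big add_continuous) => // i _; apply: cvgM.
- exact: continuous_cvg (@coord_continuous _ _ _ 0 i a0) a_cvg.
- exact: continuous_cvg (@coord_continuous _ _ _ 0 i b0) b_cvg.
Qed.

Lemma dotp3_lt_near (x0 y0 z0 : 'rV[R]_d) (c : R) : dotp3 x0 y0 z0 < c ->
  exists U V W : set 'rV[R]_d, [/\ open_nbhs x0 U, open_nbhs y0 V, open_nbhs z0 W &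
    forall x y z, U x -> V y -> W z -> dotp3 x y z < c].
Proof.
move=> lt_c; pose P := (('rV[R]_d * 'rV[R]_d) * 'rV[R]_d)%type.
have cvg11 : (fun p : P => p.1.1) @ nbhs ((x0, y0), z0) --> x0.
  exact: cvg_comp cvg_fst cvg_fst.
have cvg12 : (fun p : P => p.1.2) @ nbhs ((x0, y0), z0) --> y0.
  exact: cvg_comp cvg_fst cvg_snd.
have cvg2 : (fun p : P => p.2) @ nbhs ((x0, y0), z0) --> z0 by exact: cvg_snd.
have : (fun p : P => dotp3 p.1.1 p.1.2 p.2) @ nbhs ((x0, y0), z0) --> dotp3 x0 y0 z0.
  by apply: cvgM; first apply: cvgM; apply: dotp_cvg.
move=> /cvgr_lt /(_ _ lt_c) [[A1 A2] [[[U V] [nU nV] UV_A1] nA2] A_lt].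
move: nU nV nA2; rewrite !nbhsE => -[U' oU' U'U] [V' oV' V'V] [W oW WA2].
exists U', V', W; split => // x y z U'x V'y Wz.
apply: (A_lt ((x, y), z)); split => /=; last exact: WA2.
by apply: UV_A1; split; [exact: U'U | exact: V'V].
Qed.

Lemma ball_rowP (c y : 'rV[R]_d) (e : R) :
  ball c e y <-> 0 < e /\ forall i, `|c 0 i - y 0 i| < e.
Proof.
rewrite /ball /= /mx_ball; split=> -[e0 cy]; split => //.
  by move=> i; exact: cy.
by move=> i j; rewrite (ord1 i); exact: cy.
Qed.

Definition rat_ball (p : 'rV[rat]_d * rat) : set T :=
  ball (map_mx ratr p.1 : 'rV[R]_d) (ratr p.2).

Lemma rat_ball_sub (U : set 'rV[R]_d) (x : 'rV[R]_d) :
  open U -> U x -> exists p, rat_ball p x /\ rat_ball p `<=` U.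
Proof.
move=> oU Ux; have /nbhs_ballP[e /= e0 eU] : nbhs x U by exact: open_nbhs_nbhs.
have near i : exists q : rat, `|x 0 i - ratr q| < e / 4.
  have [q] := @rat_in_itvoo R (x 0 i - e / 4) (x 0 i + e / 4) ltac:(lra).
  by rewrite in_itv /= => /andP[? ?]; exists q; rewrite ltr_norml; apply/andP; split; lra.
have [rho] := @rat_in_itvoo R (e / 4) (e / 2) ltac:(lra).
rewrite in_itv /= => /andP[rho_gt rho_lt].
exists (\row_i xchoose (near i), rho); split.
  apply/ball_rowP; split => [|i] /=; first lra.
  by rewrite !mxE distrC; have := xchooseP (near i); lra.
move=> y /ball_rowP[_ y_near]; apply: eU; apply/ball_rowP; split => // i.
have := y_near i; rewrite !mxE => yi; have := xchooseP (near i).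
by have := ler_distD (ratr (xchoose (near i))) (x 0 i) (y 0 i); lra.
Qed.

End SphereGeometry.

Arguments measurable_sphere {R d}.

Section SecondMoments.
Variables (R : realType) (d : nat).
Local Notation T := (Rd R d).
Local Notation S := (sphere R d).
Variable mu : probability T R.
Hypothesis mu_sphere : (mu : {measure set T -> \bar R}) S = 1%E.

Lemma integrable_sphere_bounded (G : T -> \bar R) (K : R) :
  measurable_fun S G -> (forall x, S x -> (`|G x| <= K%:E)%E) ->
  mu.-integrable S G.
Proof.
move=> mG G_le; apply/integrableP; split => //.
apply: (@le_lt_trans _ _ (\int[mu]_(x in S) (cst K%:E) x)%E).
  apply: ge0_le_integral => //; first exact: measurable_sphere.
  exact: measurableT_comp mG.
by rewrite (integral_cst _ measurable_sphere) mu_sphere mule1 ltry.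
Qed.

Lemma integrable_sphere_boundedR (g : T -> R) (K : R) :
  measurable_fun setT g -> (forall x, S x -> `|g x| <= K) ->
  mu.-integrable S (fun x => (g x)%:E).
Proof.
move=> mg g_le; apply: (@integrable_sphere_bounded _ K).
  by apply/measurable_EFinP; exact: measurable_funS mg.
by move=> x Sx; rewrite lee_fin; exact: g_le.
Qed.

Lemma integrable_sphere01 (g : T -> \bar R) : measurable_fun S g ->
  (forall x, S x -> (0 <= g x <= 1)%E) -> mu.-integrable S g.
Proof.
move=> mg g01; apply: (@integrable_sphere_bounded _ 1) => // x /g01 /andP[g0 g1].
by rewrite gee0_abs.
Qed.

Lemma integrable_quad c : mu.-integrable S (fun x => (quad c x)%:E).
Proof.
apply: integrable_sphere_boundedR; first exact: measurable_quad.
exact: sphere_quad_le.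
Qed.

Lemma integral_sphere01 (g : T -> \bar R) : measurable_fun S g ->
  (forall x, S x -> (0 <= g x <= 1)%E) -> (0 <= \int[mu]_(x in S) g x <= 1)%E.
Proof.
move=> mg g01; apply/andP; split; first by apply: integral_ge0 => x /g01 /andP[].
apply: (@le_trans _ _ (\int[mu]_(x in S) (cst 1%E) x))%E.
  apply: ge0_le_integral => //; first exact: measurable_sphere.
  - by move=> x /g01 /andP[].
  - by move=> x /g01 /andP[].
by rewrite (integral_cst _ measurable_sphere) mu_sphere mule1.
Qed.

Definition moment i j := fine (\int[mu]_(x in S) (entry x i * entry x j)%:E).

Lemma integrable_entryM i j :
  mu.-integrable S (fun x => (entry x i * entry x j)%:E).
Proof.
apply: (@integrable_sphere_boundedR _ 1).
  by apply: measurable_funM; exact: measurable_entry.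
by move=> x Sx; rewrite normrM -[1]mul1r ler_pM ?sphere_entry_le1.
Qed.

Lemma integral_entryM i j :
  (\int[mu]_(x in S) (entry x i * entry x j)%:E)%E = (moment i j)%:E.
Proof.
rewrite fineK //; apply: integrable_fin_num; first exact: measurable_sphere.
exact: integrable_entryM.
Qed.

Lemma integral_quad c :
  (\int[mu]_(x in S) (quad c x)%:E)%E = (frob c moment)%:E.
Proof.
have mS : measurable S := measurable_sphere.
rewrite /quad /frob /outer.
under eq_integral do rewrite pair_bigA /= -sumEFin.
rewrite integral_sum // => [|p]; last first.
  by under eq_fun do rewrite EFinM; apply: integrableZl => //; exact: integrable_entryM.
rewrite pair_bigA /= -sumEFin; apply: eq_bigr => p _.
under eq_integral do rewrite EFinM.
by rewrite integralZl ?integral_entryM //; exact: integrable_entryM.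
Qed.

Lemma moment_sym i j : moment i j = moment j i.
Proof. by rewrite /moment; under eq_integral do rewrite mulrC. Qed.

Lemma moment_psd v : 0 <= frob (outer v v) moment.
Proof.
rewrite -lee_fin -integral_quad; apply: integral_ge0 => x _.
by rewrite quad_outer lee_fin sqr_ge0.
Qed.

Lemma moment_trace : \sum_i moment i i = 1.
Proof.
have /eqP := integral_quad (fun i j => (i == j)%:R).
rewrite (eq_integral (cst 1%:E)) => [|x /[!inE] Sx]; last first.
  rewrite /cst; congr EFin; rewrite -[RHS]Sx /quad /frob /outer; apply: eq_bigr => i _.
  rewrite (eq_bigr (fun j => 1 * (i == j)%:R * (entry x i * entry x j))) => [|j _];
    by rewrite ?sum_delta mul1r.
rewrite (integral_cst _ measurable_sphere) mu_sphere mule1 eqe => /eqP->.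
apply: eq_bigr => i _.
rewrite (eq_bigr (fun j => 1 * (i == j)%:R * moment i j)) => [|j _];
  by rewrite ?sum_delta mul1r.
Qed.

Lemma integral_dotp_sqr y :
  (\int[mu]_(x in S) (dotp x y ^+ 2)%:E)%E = (frob (outer (entry y) (entry y)) moment)%:E.
Proof.
rewrite -integral_quad; apply: eq_integral => x _; rewrite quad_outer /dotp.
by congr (EFin (_ ^+ 2)); apply: eq_bigr => i _; rewrite mulrC.
Qed.

Lemma isotropic_moment :
  isotropic mu <-> forall i j, moment i j = d%:R^-1 * (i == j)%:R.
Proof.
split=> [iso|momentE y Sy]; last first.
  rewrite integral_dotp_sqr /frob /outer; congr EFin.
  have row i : \sum_j entry y i * entry y j * moment i j =
      d%:R^-1 * (entry y i * entry y i).
    rewrite (eq_bigr (fun j => d%:R^-1 * entry y i * (i == j)%:R * entry y j)).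
      by rewrite sum_delta mulrA.
    by move=> j _; rewrite momentE; ring.
  have Sy' : \sum_i entry y i * entry y i = 1 := Sy.
  by rewrite (eq_bigr _ (fun i _ => row i)) -mulr_sumr Sy' mulr1.
have unitE (w : 'I_d -> R) : \sum_k w k ^+ 2 = 1 -> frob (outer w w) moment = d%:R^-1.
  move=> w1; have Sw : S (\row_k w k : 'rV[R]_d).
    by rewrite /sphere /= /dotp -[RHS]w1; apply: eq_bigr => k _; rewrite mxE expr2.
  have := iso _ Sw; rewrite integral_dotp_sqr => -[<-].
  by apply: eq_bigr => k _; apply: eq_bigr => l _; rewrite /outer /entry !mxE.
have diag k : moment k k = d%:R^-1.
  have := unitE (fun l => 1 * (k == l)%:R + 0 * (k == l)%:R).
  by rewrite frob_outer_pair sum_sqr_pair => /(_ ltac:(ring)) <-; ring.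
move=> i j; case: (eqVneq i j) => [<-|ij]; first by rewrite diag mulr1n mulr1.
(* the unit vector (3/5) e_i + (4/5) e_j avoids square roots *)
have := unitE (fun l => 3/5 * (i == l)%:R + 4/5 * (j == l)%:R).
rewrite frob_outer_pair sum_sqr_pair !diag [moment j i]moment_sym (negbTE ij) mulr0n.
by move=> /(_ ltac:(field)); rewrite mulr0; lra.
Qed.

Definition mass (U : set T) := fine (mu (U `&` S)).

Lemma mass_gt0 (U : set T) : measurable U -> (0 < mu U)%E -> 0 < mass U.
Proof.
move=> mU muU; have mS : measurable S := measurable_sphere.
have muC : (mu : measure T R) (~` S) = 0%E.
  by have := probability_setC mu mS; rewrite mu_sphere subee.
have notS_le0 : ((mu : measure T R) (U `\` S) <= 0)%E.
  rewrite -muC; apply: le_measure; rewrite ?inE.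
  - exact: measurableD.
  - exact: measurableC.
  - by move=> x [].
apply: fine_gt0; apply/andP; split.
  move: muU; rewrite (measureDI (mu : measure T R) mU mS) => /lt_le_trans; apply.
  by rewrite -[leRHS]add0e leeD.
apply: (@le_lt_trans _ _ 1%E); last exact: ltry.
by rewrite -(probability_setT mu); apply: le_measure; rewrite ?inE //; exact: measurableI.
Qed.

Lemma integral_quad_indic c (e : R) (U : set T) : measurable U ->
  (\int[mu]_(x in S) (quad c x + e * \1_U x)%:E)%E = (frob c moment + e * mass U)%:E.
Proof.
move=> mU; have mS : measurable S := measurable_sphere.
have int_indic : mu.-integrable S (fun x => (\1_U x)%:E).
  apply: (@integrable_sphere_boundedR _ 1); first exact: measurable_indic.
  by move=> x _; rewrite indicE; case: (x \in U); rewrite ?normr1 ?normr0.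
under eq_integral do rewrite EFinD.
rewrite integralD //; first last.
- by under eq_fun do rewrite EFinM; exact: integrableZl.
- exact: integrable_quad.
rewrite integral_quad EFinD; congr (_ + _)%E.
under eq_integral do rewrite EFinM.
rewrite integralZl // integral_indic // EFinM fineK //.
by apply: fin_num_measure; exact: measurableI.
Qed.

Lemma le_integral_quad (G : T -> \bar R) c (e : R) (U : set T) :
  measurable U -> mu.-integrable S G ->
  (forall y, S y -> ((quad c y + e * \1_U y)%:E <= G y)%E) ->
  ((frob c moment + e * mass U)%:E <= \int[mu]_(y in S) G y)%E.
Proof.
move=> mU intG G_ge; rewrite -integral_quad_indic //.
apply: le_integral => //; first exact: measurable_sphere.
- apply: (@integrable_sphere_boundedR _ (\sum_i \sum_j `|c i j| + `|e|)).
    apply: measurable_funD; first exact: measurable_quad.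
    by apply: measurable_funM => //; exact: measurable_indic.
  move=> x Sx; apply: (le_trans (ler_normD _ _)); rewrite lerD ?sphere_quad_le //.
  rewrite normrM ler_piMr // indicE.
  by case: (x \in U); rewrite ?normr1 ?normr0.
- by move=> y /[!inE]; exact: G_ge.
Qed.

Lemma integral_quad_ae (G : T -> \bar R) c (N : set T) :
  mu.-negligible N -> mu.-integrable S G ->
  (forall y, S y -> ~ N y -> G y = (quad c y)%:E) ->
  (\int[mu]_(y in S) G y)%E = (frob c moment)%:E.
Proof.
move=> [N' [mN' N'0 NN']] intG G_eq; have mS : measurable S := measurable_sphere.
rewrite -integral_quad (negligible_integral mN' mS) // [RHS](negligible_integral mN' mS) //.
  by apply: eq_integral => y /[!inE] -[Sy N'y]; apply: G_eq => // /NN'.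
exact: integrable_quad.
Qed.

Lemma negligible_not_msupport : mu.-negligible (~` msupport mu).
Proof.
pose B n : set T := if unpickle n is Some p then
  if mu (rat_ball p) == 0%E then rat_ball p else set0 else set0.
have mB p : measurable (rat_ball p) by apply: sub_sigma_algebra; exact: ball_open.
have negB n : mu.-negligible (B n).
  rewrite /B; case: unpickle => [p|]; last exact: negligible_set0.
  by case: ifPn => [/eqP mup0|_]; [exists (rat_ball p); split | exact: negligible_set0].
apply: negligibleS (negligible_bigcup negB) => x not_supp_x.
apply: contrapT => notBx; apply: not_supp_x => U oU Ux.
rewrite lt_neqAle measure_ge0 andbT eq_sym; apply/negP => /eqP muU0; apply: notBx.
have [p [px pU]] := rat_ball_sub oU Ux.
have mup0 : mu (rat_ball p) = 0%E.
  apply/eqP; rewrite eq_le measure_ge0 andbT -muU0 le_measure ?inE //.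
  exact: sub_sigma_algebra.
by exists (pickle p) => //; rewrite /B pickleK mup0 eqxx.
Qed.

Lemma measurable_integral_sphere d' (U : measurableType d') (h : U * T -> \bar R) :
  measurable_fun setT h -> (forall p, (0 <= h p)%E) ->
  measurable_fun setT (fun u => \int[mu]_(x in S) h (u, x))%E.
Proof.
move=> mh h_ge0; pose hS p := (h p * (\1_S p.2)%:E)%E.
have -> : (fun u => \int[mu]_(x in S) h (u, x))%E = fubini_F mu hS.
  apply/funext => u; rewrite /fubini_F [LHS]integral_mkcond; apply: eq_integral => x _.
  by rewrite /patch /hS indicE; case: (x \in S); rewrite ?mule1 ?mule0.
apply: (@measurable_fun_fubini_tonelli_F _ _ _ _ _ mu hS).
- apply: emeasurable_funM => //; apply/measurable_EFinP.
  exact: measurableT_comp (measurable_indic measurable_sphere) measurable_snd.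
- by move=> p; rewrite mule_ge0 // lee_fin indicE.
Qed.

Definition partial_x (y z : T) := (\int[mu]_(x in S) `|dotp3 x y z|%:E)%E.

Definition partial_xy (z : T) := (\int[mu]_(y in S) partial_x y z)%E.

Lemma measurable_partial_x :
  measurable_fun setT (fun p : T * T => partial_x p.2 p.1).
Proof.
apply: (@measurable_integral_sphere _ _ (fun p => `|dotp3 p.2 p.1.2 p.1.1|%:E)) => [|p];
  last by rewrite lee_fin.
apply/measurable_EFinP; apply: (measurableT_comp (@normr_measurable _ setT)).
have m1 := measurableT_comp measurable_fst (@measurable_fst _ _ (T * T)%type T).
have m2 := measurableT_comp measurable_snd (@measurable_fst _ _ (T * T)%type T).
rewrite /dotp3; apply: measurable_funM; first apply: measurable_funM.
- exact: measurable_dotp measurable_snd m2.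
- exact: measurable_dotp measurable_snd m1.
- exact: measurable_dotp m2 m1.
Qed.

Lemma partial_x_ge0 y z : (0 <= partial_x y z)%E.
Proof. by apply: integral_ge0 => x _; rewrite lee_fin. Qed.

Lemma measurable_partial_xy : measurable_fun setT partial_xy.
Proof.
exact: measurable_integral_sphere measurable_partial_x (fun _ => partial_x_ge0 _ _).
Qed.

Lemma partial_x_01 y z : S y -> S z -> (0 <= partial_x y z <= 1)%E.
Proof.
move=> Sy Sz; apply: integral_sphere01 => [|x Sx]; last exact: abs_dotp3_01.
exact: measurable_funS (measurable_abs_dotp3 y z).
Qed.

Lemma partial_xy_01 z : S z -> (0 <= partial_xy z <= 1)%E.
Proof.
move=> Sz; apply: integral_sphere01 => [|y Sy]; last exact: partial_x_01.
exact: measurable_funS (measurable_fun_pair2 z measurable_partial_x).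
Qed.

Lemma integrable_abs_dotp3 y z : S y -> S z ->
  mu.-integrable S (fun x => `|dotp3 x y z|%:E).
Proof.
move=> Sy Sz; apply: integrable_sphere01 => [|x Sx]; last exact: abs_dotp3_01.
exact: measurable_funS (measurable_abs_dotp3 y z).
Qed.

Lemma integrable_partial_x z : S z -> mu.-integrable S (partial_x ^~ z).
Proof.
move=> Sz; apply: integrable_sphere01 => [|y Sy]; last exact: partial_x_01.
exact: measurable_funS (measurable_fun_pair2 z measurable_partial_x).
Qed.

Lemma integrable_partial_xy : mu.-integrable S partial_xy.
Proof.
apply: integrable_sphere01 => [|z Sz]; last exact: partial_xy_01.
exact: measurable_funS measurable_partial_xy.
Qed.

Lemma partial_xyz_ge (e : R) (U V W : set T) :
  measurable U -> measurable V -> measurable W ->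
  (forall x y z, S x -> S y -> S z ->
     dotp3 x y z + e * (\1_U x * \1_V y * \1_W z) <= `|dotp3 x y z|) ->
  ((cube_trace moment + e * (mass U * mass V * mass W))%:E <=
   \int[mu]_(z in S) partial_xy z)%E.
Proof.
move=> mU mV mW dotp3_ge.
have ge_x y z : S y -> S z -> ((quad (fun i k => \sum_j moment i j * entry z j * entry z k) y
    + (e * mass U * \1_W z) * \1_V y)%:E <= partial_x y z)%E.
  move=> Sy Sz; apply: le_trans (le_integral_quad
    (c := fun i j => entry y i * entry z j * dotp y z) (e := e * \1_V y * \1_W z) mU _ _).
  - by rewrite frob_dotp_quad lee_fin le_eqVlt; apply/predU1P; left; ring.
  - exact: integrable_abs_dotp3.
  - move=> x Sx; rewrite lee_fin -dotp3_quad.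
    by apply: le_trans (dotp3_ge x y z Sx Sy Sz); rewrite le_eqVlt; apply/predU1P; left; ring.
have ge_xy z : S z -> ((quad (fun j k => \sum_i moment i j * moment i k) z
    + (e * mass U * mass V) * \1_W z)%:E <= partial_xy z)%E.
  move=> Sz; apply: le_trans (le_integral_quad
    (c := fun i k => \sum_j moment i j * entry z j * entry z k)
    (e := e * mass U * \1_W z) mV (integrable_partial_x Sz) _).
  - by rewrite frob_quad_cube lee_fin le_eqVlt; apply/predU1P; left; ring.
  - move=> y Sy; apply: le_trans (ge_x y z Sy Sz).
    by rewrite lee_fin le_eqVlt; apply/predU1P; left; ring.
apply: le_trans (le_integral_quad (c := fun j k => \sum_i moment i j * moment i k)
  (e := e * mass U * mass V) mW integrable_partial_xy ge_xy).
by rewrite /cube_trace lee_fin le_eqVlt; apply/predU1P; left; ring.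
Qed.

Lemma cube_trace_le_partial_xyz :
  ((cube_trace moment)%:E <= \int[mu]_(z in S) partial_xy z)%E.
Proof.
have := @partial_xyz_ge 0 _ _ _ measurableT measurableT measurableT.
rewrite mul0r addr0; apply=> x y z _ _ _; rewrite mul0r addr0; exact: ler_norm.
Qed.

Lemma partial_xyz_eq (N : set T) : mu.-negligible N ->
  (forall x y z, S x -> S y -> S z -> ~ N x -> ~ N y -> ~ N z -> 0 <= dotp3 x y z) ->
  (\int[mu]_(z in S) partial_xy z)%E = (cube_trace moment)%:E.
Proof.
move=> negN dotp3_ge0.
have eq_x y z : S y -> S z -> ~ N y -> ~ N z ->
    partial_x y z = (quad (fun i k => \sum_j moment i j * entry z j * entry z k) y)%:E.
  move=> Sy Sz Ny Nz; rewrite -frob_dotp_quad.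
  apply: integral_quad_ae negN (integrable_abs_dotp3 Sy Sz) _ => x Sx Nx.
  by rewrite ger0_norm ?dotp3_quad // -dotp3_quad; apply: dotp3_ge0.
have eq_xy z : S z -> ~ N z ->
    partial_xy z = (quad (fun j k => \sum_i moment i j * moment i k) z)%:E.
  move=> Sz Nz; rewrite -frob_quad_cube.
  by apply: integral_quad_ae negN (integrable_partial_x Sz) _ => y Sy Ny; exact: eq_x.
by apply: integral_quad_ae negN integrable_partial_xy _ => z Sz Nz; exact: eq_xy.
Qed.

Lemma msupport_dotp3_ge0 :
  (\int[mu]_(z in S) partial_xy z)%E = (cube_trace moment)%:E ->
  forall x y z, msupport mu x -> msupport mu y -> msupport mu z -> 0 <= dotp3 x y z.
Proof.
move=> I_eq x y z sx sy sz; rewrite leNgt; apply/negP => neg.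
have [U [V [W [[oU Ux] [oV Vy] [oW Wz] lt_half]]]] :=
  @dotp3_lt_near R d x y z (dotp3 x y z / 2) ltac:(lra).
have [mU mV mW] : [/\ measurable (U : set T), measurable (V : set T) & measurable (W : set T)].
  by split; apply: sub_sigma_algebra.
pose e := - dotp3 x y z.
have ge_abs x' y' z' : S x' -> S y' -> S z' ->
    dotp3 x' y' z' + e * (\1_U x' * \1_V y' * \1_W z') <= `|dotp3 x' y' z'|.
  move=> _ _ _; rewrite !indicE.
  case: (boolP (x' \in U)) => [/set_mem Ux'|_]; case: (boolP (y' \in V)) => [/set_mem Vy'|_];
    case: (boolP (z' \in W)) => [/set_mem Wz'|_];
    rewrite ?mulr1n ?mulr0n ?mulr1 ?mulr0 ?mul0r ?addr0 ?ler_norm //.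
  have := lt_half x' y' z' Ux' Vy' Wz'; rewrite /e => lt.
  by rewrite ltr0_norm; lra.
have := partial_xyz_ge mU mV mW ge_abs; rewrite I_eq lee_fin gerDl leNgt => /negP; apply.
have e_gt0 : 0 < e by rewrite /e; lra.
by rewrite !mulr_gt0 // mass_gt0 // ?(sx _ oU Ux, sy _ oV Vy, sz _ oW Wz).
Qed.

End SecondMoments.

Theorem corollary4p3 (R : realType) (d : nat) (hd : (0 < d)%N)
    (mu : probability (Rd R d) R) (hS : mu (sphere R d) = 1%E) :
  let I := (\int[mu]_(z in sphere R d) \int[mu]_(y in sphere R d)
             \int[mu]_(x in sphere R d)
               (`| dotp x y * dotp x z * dotp y z |)%:E)%E in
  ((d%:R ^+ 2)^-1%:E <= I)%E /\
  (I = ((d%:R ^+ 2)^-1)%:E <->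
     isotropic mu /\
     (forall x y z, msupport mu x -> msupport mu y -> msupport mu z ->
        0 <= dotp x y * dotp x z * dotp y z)).
Proof.
move=> I; rewrite -exprVn.
have M_sym := @moment_sym _ _ mu; have M_psd := moment_psd hS; have M_tr := moment_trace hS.
have cube_le : ((cube_trace (moment mu))%:E <= I)%E := cube_trace_le_partial_xyz hS.
split; first by apply: le_trans cube_le; rewrite lee_fin cube_trace_ge.
split => [I_min | [iso supp]].
  have cube_min : cube_trace (moment mu) = d%:R^-1 ^+ 2.
    by apply/eqP; rewrite eq_le cube_trace_ge // andbT -lee_fin -I_min.
  split; first exact/isotropic_moment/(cube_trace_eq M_sym M_psd M_tr hd).
  by apply: (msupport_dotp3_ge0 hS); rewrite cube_min -I_min.
have momentE : moment mu = fun i j => d%:R^-1 * (i == j)%:R.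
  by apply/funext => i; apply/funext => j; exact: (isotropic_moment hS).1.
rewrite /I (partial_xyz_eq hS (negligible_not_msupport mu)); last first.
  by move=> x y z _ _ _ /contrapT sx /contrapT sy /contrapT sz; exact: supp.
have d0 : d%:R != 0 :> R by rewrite pnatr_eq0 -lt0n.
by rewrite momentE cube_trace_scalar; congr EFin; field.
Qed.
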